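(* Let $L>0$, $I$ a finite index set and $\{(x_i,f_i,g_i,h_i,s_i)\}_{i\in I}\subset\mathbb{R}^n\times\mathbb{R}\times\mathbb{R}^n\times\mathbb{R}\times\mathbb{R}^n$. The following are equivalent: (i) there exist functions $f,h:\mathbb{R}^n\to\mathbb{R}$ with $f$ and $Lh-f$ convex such that for all $i\in I$: $f_i=f(x_i)$, $g_i\in\partial f(x_i)$, $h_i=h(x_i)$, $s_i\in\partial h(x_i)$, and $Ls_i-g_i\in\partial(Lh-f)(x_i)$; (ii) for all $i,j\in I$ with $i\neq j$, \[ f_i-f_j-\langle g_j,x_i-x_j\rangle\ge0,\qquad (Lh_i-f_i)-(Lh_j-f_j)-\langle Ls_j-g_j,x_i-x_j\rangle\ge0. \]
   Context: $\partial$ denotes the convex subdifferential. *)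

From mathcomp Require Import all_boot all_order all_algebra.
From mathcomp Require Import reals.
Set Implicit Arguments. Unset Strict Implicit. Unset Printing Implicit Defensive.
Import Order.TTheory GRing.Theory Num.Theory.
Local Open Scope ring_scope.

Definition dotp (R : realType) (n : nat) (u v : 'rV[R]_n) : R :=
  \sum_(k < n) u ord0 k * v ord0 k.

Definition convex_fun (R : realType) (n : nat) (f : 'rV[R]_n -> R) : Prop :=
  forall (x y : 'rV[R]_n) (t : R), 0 <= t -> t <= 1 ->
    f (t *: x + (1 - t) *: y) <= t * f x + (1 - t) * f y.

Definition subgrad (R : realType) (n : nat) (f : 'rV[R]_n -> R)
    (x g : 'rV[R]_n) : Prop :=
  forall y : 'rV[R]_n, f x + dotp g (y - x) <= f y.

(** Sufficiency is the convex interpolation theorem applied twice.  Data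
    [(x_i, c_i, d_i)] satisfying [c_j + <d_j, x_i - x_j> <= c_i] are interpolated
    by the convex function [z |-> max_j (c_j + <d_j, z - x_j>)], which takes the
    value [c_i] at [x_i] and has the affine piece [i] as a supporting
    hyperplane there.  Interpolating [(f_i, g_i)] by [f] and
    [(L h_i - f_i, L s_i - g_i)] by [phi], the function [h = (phi + f) / L] works,
    since subgradients add and scale.  Necessity is the subgradient inequality
    at [x_j] evaluated at [x_i]. *)
From mathcomp Require Import all_boot all_order all_algebra.
From mathcomp Require Import reals boolp.
From mathcomp Require Import ring lra.
Set Implicit Arguments. Unset Strict Implicit. Unset Printing Implicit Defensive.
Import Order.TTheory GRing.Theory Num.Theory.
Local Open Scope ring_scope.

Section InnerProduct.
Variables (R : realType) (n : nat).
Implicit Types (u v w : 'rV[R]_n).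

Lemma dotpDl u v w : dotp (u + v) w = dotp u w + dotp v w.
Proof. by rewrite /dotp -big_split; apply: eq_bigr => k _; rewrite !mxE mulrDl. Qed.

Lemma dotpDr u v w : dotp u (v + w) = dotp u v + dotp u w.
Proof. by rewrite /dotp -big_split; apply: eq_bigr => k _; rewrite !mxE mulrDr. Qed.

Lemma dotpZl a u w : dotp (a *: u) w = a * dotp u w.
Proof. by rewrite /dotp mulr_sumr; apply: eq_bigr => k _; rewrite !mxE mulrA. Qed.

Lemma dotpZr a u w : dotp u (a *: w) = a * dotp u w.
Proof. by rewrite /dotp mulr_sumr; apply: eq_bigr => k _; rewrite !mxE mulrCA. Qed.

Lemma dotpNr u w : dotp u (- w) = - dotp u w.
Proof. by rewrite /dotp -sumrN; apply: eq_bigr => k _; rewrite !mxE mulrN. Qed.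

Lemma dotp0r u : dotp u 0 = 0.
Proof. by rewrite /dotp big1 // => k _; rewrite mxE mulr0. Qed.

End InnerProduct.

Section Subgradients.
Variables (R : realType) (n : nat).
Implicit Types (x a b : 'rV[R]_n).

Lemma subgradD f1 f2 x a b :
  subgrad f1 x a -> subgrad f2 x b -> subgrad (fun z => f1 z + f2 z) x (a + b).
Proof. by move=> Ha Hb y; rewrite dotpDl; have := Ha y; have := Hb y; lra. Qed.

Lemma subgradZ (k : R) f x a :
  0 <= k -> subgrad f x a -> subgrad (fun z => k * f z) x (k *: a).
Proof. by move=> k_ge0 Ha y; rewrite dotpZl -mulrDr; apply: ler_wpM2l. Qed.

End Subgradients.

Section MaxAffine.
Variables (R : realType) (n : nat) (I : finType).
Variables (c : I -> R) (d xs : I -> 'rV[R]_n).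

Definition affine_piece (j : I) (z : 'rV[R]_n) : R := c j + dotp (d j) (z - xs j).

Definition max_affine (i0 : I) (z : 'rV[R]_n) : R :=
  \big[Num.max/affine_piece i0 z]_j affine_piece j z.

Lemma affine_piece_le_max i0 j z : affine_piece j z <= max_affine i0 z.
Proof. by rewrite /max_affine (bigD1 j) //= le_max lexx. Qed.

Lemma max_affine_attained i0 z : exists j, max_affine i0 z = affine_piece j z.
Proof.
rewrite /max_affine; elim/big_ind: _ => [|a b [ja ->] [jb ->]|j _];
  [by exists i0 | | by exists j].
by case: leP => _; [exists jb | exists ja].
Qed.

Lemma affine_piece_combination j y z t :
  affine_piece j (t *: y + (1 - t) *: z) =
  t * affine_piece j y + (1 - t) * affine_piece j z.
Proof. by rewrite /affine_piece !dotpDr !dotpNr !dotpZr; ring. Qed.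

Lemma max_affine_convex i0 : convex_fun (max_affine i0).
Proof.
move=> y z t t_ge0 t_le1; have [j ->] := max_affine_attained i0 (t *: y + (1 - t) *: z).
rewrite affine_piece_combination; apply: lerD; apply: ler_wpM2l;
  by rewrite ?subr_ge0 ?affine_piece_le_max.
Qed.

Hypothesis interpolable :
  forall i j, i != j -> 0 <= c i - c j - dotp (d j) (xs i - xs j).

Lemma affine_piece_le_value i j : affine_piece j (xs i) <= c i.
Proof.
rewrite /affine_piece; have [->|neq_ij] := eqVneq i j.
  by rewrite subrr dotp0r addr0.
by have := interpolable neq_ij; lra.
Qed.

Lemma max_affine_interp i0 i : max_affine i0 (xs i) = c i.
Proof.
apply/eqP; rewrite eq_le; apply/andP; split.
  by have [j ->] := max_affine_attained i0 (xs i); apply: affine_piece_le_value.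
by have := affine_piece_le_max i0 i (xs i); rewrite /affine_piece subrr dotp0r addr0.
Qed.

Lemma max_affine_subgrad i0 i : subgrad (max_affine i0) (xs i) (d i).
Proof. by move=> z; rewrite max_affine_interp; apply: affine_piece_le_max. Qed.

Lemma convex_interpolation : exists f : 'rV[R]_n -> R,
  convex_fun f /\ forall i, f (xs i) = c i /\ subgrad f (xs i) (d i).
Proof.
have [i0 _ | I_empty] := pickP (fun _ : I => true).
  exists (max_affine i0); split; first exact: max_affine_convex.
  by move=> i; rewrite max_affine_interp; split; last exact: max_affine_subgrad.
exists (fun _ => 0); split; last by move=> i; have := I_empty i.
by move=> y z t _ _; rewrite !mulr0 addr0.
Qed.

End MaxAffine.

Theorem corollary4p3 (R : realType) (n : nat) (L : R) (I : finType)
    (x : I -> 'rV[R]_n) (fv : I -> R) (g : I -> 'rV[R]_n)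
    (hv : I -> R) (s : I -> 'rV[R]_n) :
  0 < L ->
  (exists f h : 'rV[R]_n -> R,
      convex_fun f /\ convex_fun (fun z => L * h z - f z) /\
      forall i : I,
        fv i = f (x i) /\ subgrad f (x i) (g i) /\
        hv i = h (x i) /\ subgrad h (x i) (s i) /\
        subgrad (fun z => L * h z - f z) (x i) (L *: s i - g i))
  <->
  (forall i j : I, i != j ->
      0 <= fv i - fv j - dotp (g j) (x i - x j) /\
      0 <= (L * hv i - fv i) - (L * hv j - fv j)
             - dotp (L *: s j - g j) (x i - x j)).
Proof.
move=> L_gt0; have L_neq0 : L != 0 by rewrite gt_eqF.
split=> [[f [h [_ [_ data]]]] i j _ | interpolable].
  have [-> [_ [-> _]]] := data i; have [-> [g_sub [-> [_ phi_sub]]]] := data j.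
  by have := g_sub (x i); have := phi_sub (x i); lra.
have [f [f_cvx f_data]] :=
  convex_interpolation (fun i j neq_ij => (interpolable i j neq_ij).1).
have [phi [phi_cvx phi_data]] :=
  convex_interpolation (fun i j neq_ij => (interpolable i j neq_ij).2).
pose h z := L^-1 * (phi z + f z).
have phiE : (fun z => L * h z - f z) = phi.
  by apply: funext => z; rewrite /h mulrA mulfV // mul1r addrK.
exists f, h; rewrite phiE; split=> //; split=> // i.
have [f_xi f_sub] := f_data i; have [phi_xi phi_sub] := phi_data i.
do !split => //.
- by rewrite /h f_xi phi_xi subrK mulrA mulVf // mul1r.
- have Linv_ge0 : 0 <= L^-1 by rewrite invr_ge0 ltW.
  have := subgradZ Linv_ge0 (subgradD phi_sub f_sub).
  by rewrite subrK scalerA mulVf // scale1r.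
Qed.
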